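(* Let $k=k(n)$ be integers with $3\le k(n)\le n-3$ for all sufficiently large $n$, and suppose $\log k(n)/\log n\to 0$ as $n\to\infty$. Then for all sufficiently large $n$, \[ \mathsf{BO}(k(n),\mathbb{Z}/n\mathbb{Z})\ge n\exp\!\left(-5\sqrt{\log k(n)\,\log n}\right). \]
   Context: For a positive integer $k$, a set $\{g_1,\dots,g_k\}$ of $k$ distinct elements of a finite abelian group $G$ (written additively) is called $k$-barycentric if $\sum_{i=1}^k g_i = k\,g_j$ for some $1\le j\le k$. The $k$-th barycentric Olson constant $\mathsf{BO}(k,G)$ is the smallest integer $\ell$ such that every subset $A\subseteq G$ with $|A|\ge \ell$ contains a $k$-barycentric subset (so that always $\mathsf{BO}(k,G)\le |G|+1$). $\log$ denotes the natural logarithm. *)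

From Stdlib Require Import Reals.
From HB Require Import structures.
From mathcomp Require Import all_boot all_order all_algebra.

Set Implicit Arguments.
Unset Strict Implicit.
Unset Printing Implicit Defensive.

Local Open Scope nat_scope.

Section Bary.
Variable G : finZmodType.

Definition barycentric (k : nat) (B : {set G}) : bool :=
  (#|B| == k) && [exists j in B, (\sum_(g in B) g)%R == (j *+ k)%R].

Definition has_barycentric (k : nat) (A : {set G}) : bool :=
  [exists B : {set G}, (B \subset A) && barycentric k B].

Definition BO_good (k l : nat) : bool :=
  [forall A : {set G}, (l <= #|A|) ==> has_barycentric k A].

Lemma BO_good_ex (k : nat) : exists l, BO_good k l.
Proof.
exists #|G|.+1; apply/forallP => A; apply/implyP => H.
by move: (leq_trans H (max_card A)); rewrite ltnn.
Qed.

Definition BO (k : nat) : nat := ex_minn (@BO_good_ex k).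
End Bary.

From Stdlib Require Import Reals Lra ZArith.
From HB Require Import structures.
From mathcomp Require Import all_boot all_order all_algebra zify.

Set Implicit Arguments.
Unset Strict Implicit.
Unset Printing Implicit Defensive.

Import GRing.Theory.

(* Fix m, D with (k m)^D <= n and read a vector v of
   {0,...,m-1}^D as the base-(k m) integer sum_i v_i (k m)^i < n, hence as an
   element of Z/nZ.  Let A be the image of the vectors of a fixed squared norm r.
   If B were a k-barycentric subset of A, the relation sum_{b in B} b = k b_j
   would compare integers smaller than n, and the digits of both sides are
   smaller than k m, so it would hold coordinatewise: b_j would be the
   barycentre of k distinct points of its own sphere, which is impossible
   because every point of a sphere is extreme.  By pigeonhole on the at most
   D m^2 possible norms, m^D <= BO(k, Z/nZ) * D m^2.

   With K = log k, L = log n, D about sqrt(L/K) + 1 and m about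
   exp(L/D)/k, the quotient m^(D-2)/D is at least n exp(-5 sqrt(K L)) provided
   L >= 100 and 16 K <= L; both hold for large n when K/L -> 0. *)

Lemma card_lt_BO (G : finZmodType) (k : nat) (A : {set G}) :
  ~~ has_barycentric k A -> #|A| < BO G k.
Proof.
move=> noB; rewrite /BO; case: ex_minnP => l /forallP /(_ A) good _.
by rewrite ltnNge; apply: contra noB => le_lA; rewrite le_lA in good.
Qed.

Section Expansion.
Variable b : nat.

Definition expansion (D : nat) (a : 'I_D -> nat) : nat := \sum_(i < D) a i * b ^ i.

Lemma expansionS (D : nat) (a : 'I_D.+1 -> nat) :
  expansion a = a ord0 + b * expansion (fun i => a (lift ord0 i)).
Proof.
rewrite /expansion big_ord_recl expn0 muln1 big_distrr; congr (_ + _).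
by apply: eq_bigr => i _; rewrite lift0 expnS mulnCA.
Qed.

Lemma expansion_lt (D : nat) (a : 'I_D -> nat) :
  (forall i, a i < b) -> expansion a < b ^ D.
Proof.
elim: D a => [|D IH] a small; first by rewrite /expansion big_ord0.
have tail_lt := IH _ (fun i => small (lift ord0 i)).
rewrite expansionS expnS.
apply: (@leq_trans (b + b * expansion (fun i => a (lift ord0 i)))).
  by rewrite ltn_add2r.
by rewrite -mulnS leq_mul2l tail_lt orbT.
Qed.

Lemma expansion_inj (D : nat) (a c : 'I_D -> nat) :
  (forall i, a i < b) -> (forall i, c i < b) -> expansion a = expansion c -> a =1 c.
Proof.
elim: D a c => [|D IH] a c small_a small_c; first by move=> _ [].
have b_gt0 : 0 < b by have := small_a ord0; lia.
rewrite !expansionS => eq_ac.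
have eq0 : a ord0 = c ord0.
  have := congr1 (modn^~ b) eq_ac.
  by rewrite ![_ + b * _]addnC ![b * _]mulnC !modnMDl !modn_small.
move: eq_ac; rewrite eq0 => /addnI /eqP; rewrite eqn_pmul2l // => /eqP.
move/(IH _ _ (fun i => small_a _) (fun i => small_c _)) => eq_tail i.
by case: (unliftP ord0 i) => [j ->|->].
Qed.

Lemma expansion_sum (I : finType) (P : pred I) (D : nat) (a : I -> 'I_D -> nat) :
  \sum_(x | P x) expansion (a x) = expansion (fun i => \sum_(x | P x) a x i).
Proof.
by rewrite /expansion exchange_big; apply: eq_bigr => i _; rewrite big_distrl.
Qed.

Lemma expansionM (c D : nat) (a : 'I_D -> nat) :
  c * expansion a = expansion (fun i => c * a i).
Proof. by rewrite /expansion big_distrr; apply: eq_bigr => i _ /=; rewrite mulnA. Qed.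

End Expansion.

Section Sphere.
Variables D m : nat.
Local Notation vec := {ffun 'I_D -> 'I_m}.

Definition sqnorm (v : vec) : nat := \sum_(i < D) v i * v i.
Definition dot (u v : vec) : nat := \sum_(i < D) u i * v i.
Definition sqdist (u v : vec) : nat :=
  \sum_(i < D) ((u i - v i) * (u i - v i) + (v i - u i) * (v i - u i)).
Definition sphere (r : nat) : {set vec} := [set v | sqnorm v == r].

Lemma sqnormD (u v : vec) : sqnorm u + sqnorm v = 2 * dot u v + sqdist u v.
Proof.
rewrite /sqnorm /dot /sqdist -big_split big_distrr -big_split /=.
by apply: eq_bigr => i _; nia.
Qed.

Lemma sqdist_eq0 (u v : vec) : sqdist u v = 0 -> u = v.
Proof.
move/eqP; rewrite sum_nat_eq0 => /forallP zero.
by apply/ffunP => i; apply: val_inj; have /= /eqP := zero i; nia.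
Qed.

(* Points of a sphere are extreme: a point w of V that is the barycentre of V,
   with V on a sphere, is its only point, since sum_(v in V) <v, w> = |V| r
   forces |v - w|^2 = 0 for all v in V. *)
Lemma sphere_extreme (V : {set vec}) (w : vec) (r : nat) :
  w \in V -> V \subset sphere r ->
  (forall i, \sum_(v in V) (v i : nat) = #|V| * w i) -> V \subset [set w].
Proof.
move=> wV /subsetP onS bary.
have norm v : v \in V -> sqnorm v = r by move/onS; rewrite inE => /eqP.
have sum_dot : \sum_(v in V) dot v w = #|V| * r.
  rewrite /dot exchange_big -(norm w wV) /sqnorm big_distrr /=.
  by apply: eq_bigr => i _; rewrite -big_distrl /= bary mulnA.
have : \sum_(v in V) (2 * dot v w + sqdist v w) = \sum_(v in V) 2 * r.
  by apply: eq_bigr => v vV; rewrite -sqnormD (norm v vV) (norm w wV) addnn -mul2n.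
rewrite big_split /= -big_distrr /= sum_dot sum_nat_const => total.
have /eqP : \sum_(v in V) sqdist v w = 0.
  by move: total; rewrite mulnCA -[RHS]addn0 => /addnI.
rewrite sum_nat_eq0 => /forallP dist0.
apply/subsetP => v vV; rewrite inE.
by apply/eqP/sqdist_eq0/eqP; have := dist0 v; rewrite vV.
Qed.

Lemma sqnorm_lt (v : vec) : 0 < D -> sqnorm v < D * m * m.
Proof.
move=> D_gt0; have m_gt0 : 0 < m by case: m v => [|//] v; case: (v (Ordinal D_gt0)).
apply: (@leq_ltn_trans (\sum_(i < D) m.-1 * m.-1)).
  by apply: leq_sum => i _; have := ltn_ord (v i); nia.
rewrite sum_nat_const card_ord; nia.
Qed.

Lemma large_sphere : 0 < D -> 0 < m ->
  exists r, m ^ D <= #|sphere r| * (D * m * m).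
Proof.
move=> D_gt0 m_gt0; set N := D * m * m.
pose radius (v : vec) : 'I_N := Ordinal (sqnorm_lt v D_gt0).
have partition : \sum_(r < N) #|sphere r| = m ^ D.
  have <- : #|vec| = m ^ D by rewrite card_ffun !card_ord.
  rewrite -sum1_card (partition_big radius predT) //=.
  by apply: eq_bigr => r _; rewrite -sum1_card; apply: eq_bigl => v; rewrite inE.
have [r big_r | none] := pickP (fun r : 'I_N => m ^ D <= #|sphere r| * N).
  by exists r.
have : \sum_(r < N) #|sphere r| * N <= \sum_(r < N) (m ^ D).-1.
  by apply: leq_sum => r _; have := none r; rewrite /= => /negbT; rewrite -ltnNge; lia.
rewrite -big_distrl /= partition sum_nat_const card_ord.
have : 0 < m ^ D by rewrite expn_gt0 m_gt0.
have : 0 < N by rewrite /N !muln_gt0 D_gt0 m_gt0.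
nia.
Qed.

End Sphere.

Section Construction.
Variables n k m D : nat.
Hypotheses (k_gt1 : 1 < k) (m_gt0 : 0 < m) (D_gt0 : 0 < D) (room : (k * m) ^ D <= n).
Local Notation vec := {ffun 'I_D -> 'I_m}.

Definition encode (v : vec) : 'Z_n := ((expansion (k * m) (fun i => v i))%:R)%R.

(* The room hypothesis forces n >= k m >= 2. *)
Lemma n_gt1 : 1 < n.
Proof.
apply: leq_trans room; rewrite -[X in X < _]muln1.
apply: leq_trans (leq_pexp2l _ D_gt0); rewrite ?expn1 ?muln_gt0; nia.
Qed.

Lemma natZp_inj (a c : nat) : a < n -> c < n -> ((a%:R : 'Z_n) = c%:R)%R -> a = c.
Proof.
move=> a_lt c_lt /(congr1 val); rewrite /= !val_Zp_nat ?n_gt1 //.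
by rewrite !modn_small.
Qed.

Lemma expansion_lt_n (a : 'I_D -> nat) :
  (forall i, a i < k * m) -> expansion (k * m) a < n.
Proof. by move=> small; apply: leq_trans room; apply: expansion_lt. Qed.

Lemma digit_lt (v : vec) (i : 'I_D) : v i < k * m.
Proof. by have := ltn_ord (v i); nia. Qed.

Lemma encode_inj : injective encode.
Proof.
move=> u v /natZp_inj eq_uv; apply/ffunP => i; apply: val_inj.
by apply: (expansion_inj (digit_lt u) (digit_lt v)); apply: eq_uv;
  apply: expansion_lt_n; apply: digit_lt.
Qed.

(* No carries: a barycentric relation among k encoded vectors holds digitwise. *)
Lemma barycentre_digits (V : {set vec}) (w : vec) : #|V| = k ->
  (\sum_(v in V) encode v = encode w *+ k)%R ->
  forall i, \sum_(v in V) (v i : nat) = k * w i.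
Proof.
move=> card_V; rewrite /encode -natr_sum -mulrnA [_ * k]mulnC.
rewrite expansion_sum expansionM.
have sum_lt i : \sum_(v in V) (v i : nat) < k * m.
  apply: (@leq_ltn_trans (\sum_(v in V) m.-1)).
    by apply: leq_sum => v _; have := ltn_ord (v i); lia.
  by rewrite sum_nat_const card_V; nia.
have scaled_lt i : k * w i < k * m by rewrite ltn_pmul2l ?ltn_ord //; lia.
move/natZp_inj; rewrite !expansion_lt_n // => /(_ isT isT).
exact: expansion_inj.
Qed.

Lemma sphere_no_barycentric (r : nat) : ~~ has_barycentric k (encode @: sphere D m r).
Proof.
apply/negP => /existsP [B /andP [sub_BA /andP [/eqP card_B /existsP [g /andP [gB /eqP bary]]]]].
set V := encode @^-1: B.
have BV : B = encode @: V.
  apply/setP => x; apply/idP/imsetP => [xB | [v vV ->]]; last by rewrite inE in vV.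
  have /imsetP [v _ xv] := subsetP sub_BA x xB.
  by exists v; rewrite /V ?inE -?xv.
have card_V : #|V| = k by rewrite -card_B BV card_imset //; apply: encode_inj.
have [w wV gw] : exists2 w, w \in V & g = encode w by apply/imsetP; rewrite -BV.
have V_sphere : V \subset sphere D m r.
  apply/subsetP => v; rewrite inE => /(subsetP sub_BA) /imsetP [u uS /encode_inj ->].
  exact: uS.
move: bary; rewrite BV big_imset /=; last by move=> u v _ _; apply: encode_inj.
rewrite gw => /(barycentre_digits card_V); rewrite -card_V => digits.
have := subset_leq_card (sphere_extreme wV V_sphere digits).
by rewrite cards1 card_V; lia.
Qed.

End Construction.

Theorem BO_Zn_lower (n k m D : nat) : 1 < k -> 0 < m -> 0 < D -> (k * m) ^ D <= n ->
  m ^ D <= BO [the finZmodType of 'Z_n] k * (D * m * m).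
Proof.
move=> k_gt1 m_gt0 D_gt0 room.
have [r big_r] := large_sphere D_gt0 m_gt0.
apply: leq_trans big_r _; rewrite leq_mul2r; apply/orP; right; apply: ltnW.
have := card_lt_BO (sphere_no_barycentric k_gt1 m_gt0 D_gt0 room r).
by rewrite card_imset //; apply: encode_inj.
Qed.

Local Open Scope R_scope.

Lemma ln_le_mono (x y : R) : 0 < x -> x <= y -> ln x <= ln y.
Proof. by move=> x_gt0 /Rle_lt_or_eq_dec [lt|->]; [left; apply: ln_increasing | lra]. Qed.

Lemma exp_le_mono (x y : R) : x <= y -> exp x <= exp y.
Proof. by move=> /Rle_lt_or_eq_dec [lt|->]; [left; apply: exp_increasing | lra]. Qed.

(* Stdlib's ln vanishes on nonpositive reals. *)
Lemma pos_of_ln_pos (x : R) : 0 < ln x -> 0 < x.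
Proof. by rewrite /ln; case: Rlt_dec => //= _; lra. Qed.

Lemma pow_as_exp (a : R) (j : nat) : 0 < a -> a ^ j = exp (INR j * ln a).
Proof. by move=> a_gt0; rewrite -Rpower_pow. Qed.

Lemma le_div_of_mul (a b c : R) : 0 < c -> a * c <= b -> a <= b / c.
Proof.
move=> c_gt0 le_ac; have -> : a = a * c / c by field; lra.
by apply: Rmult_le_compat_r => //; left; apply: Rinv_0_lt_compat.
Qed.

Lemma div_le_of_mul (a b c : R) : 0 < c -> a <= b * c -> a / c <= b.
Proof.
move=> c_gt0 le_ac; have -> : b = b * c / c by field; lra.
by apply: Rmult_le_compat_r => //; left; apply: Rinv_0_lt_compat.
Qed.

Lemma nat_floor (t : R) : 0 <= t -> exists j : nat, t - 1 < INR j <= t.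
Proof.
move=> t_ge0; have [up_gt up_le] := archimed t.
have up_pos : Z.le 0 (Z.sub (up t) 1).
  have : 0 < IZR (up t) by lra.
  by move/lt_0_IZR; lia.
exists (Z.to_nat (Z.sub (up t) 1)); rewrite INR_IZR_INZ Z2Nat.id // minus_IZR /=; lra.
Qed.

(* A crude logarithmic bound, used for ln D <= sqrt(K L) / 2. *)
Lemma ln_succ_le_half (y : R) : 8 <= y -> ln (y + 1) <= y / 2.
Proof.
move=> y_ge8; rewrite -(ln_exp (y / 2)); apply: ln_le_mono; first lra.
have -> : y / 2 = y / 4 + y / 4 by field.
rewrite exp_plus; have := exp_ineq1_le (y / 4); nra.
Qed.

Lemma geometric_mean_bounds (K L : R) : 0 <= K -> 16 * K <= L ->
  4 * K <= sqrt (K * L) /\ 4 * sqrt (K * L) <= L.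
Proof.
move=> K_ge0 KL; have x_ge0 := sqrt_pos (K * L).
have xx : sqrt (K * L) * sqrt (K * L) = K * L by apply: sqrt_sqrt; nra.
split; nra.
Qed.

(* ln 2 is between 0 and 1, so ln(2k) = ln 2 + K <= 2K. *)
Lemma ln2_bounds : 0 < ln 2 < 1.
Proof.
split; first by have := ln_lt_2; lra.
rewrite -(ln_exp 1); apply: ln_increasing; first lra.
by have := exp_ineq1 1; lra.
Qed.

(* The key estimate: for a = exp(L/d) / (2 e^K), the logarithm
   (d - 2)(L/d - ln 2 - K) - ln d of a^(d-2)/d exceeds L - 5 sqrt(K L)
   when sqrt(L/K) < d <= sqrt(L/K) + 1. *)
Lemma exponent_estimate (K L d : R) : 1 <= K -> 100 <= L -> 16 * K <= L ->
  sqrt (K * L) / K < d <= sqrt (K * L) / K + 1 ->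
  L - 5 * sqrt (K * L) <= (d - 2) * (L / d - (ln 2 + K)) - ln d.
Proof.
move=> K_ge1 L_ge100 KL [d_gt d_le].
have [Kx xL] := geometric_mean_bounds (ltac:(lra) : 0 <= K) KL.
have xx : sqrt (K * L) * sqrt (K * L) = K * L by apply: sqrt_sqrt; nra.
have x_ge0 := sqrt_pos (K * L).
set x := sqrt (K * L) in d_gt d_le Kx xL xx x_ge0 *.
set s := x / K in d_gt d_le.
have sK : s * K = x by rewrite /s; field; lra.
have xs : x * s = L.
  have -> : x * s = x * x / K by rewrite /s; field; lra.
  by rewrite xx; field; lra.
have s_ge4 : 4 <= s by nra.
have ln_d : ln d <= x / 2.
  have yy : sqrt L * sqrt L = L by apply: sqrt_sqrt; lra.
  have y_ge0 := sqrt_pos L.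
  have y_ge8 : 8 <= sqrt L by nra.
  have s_le_y : s <= sqrt L by nra.
  have y_le_x : sqrt L <= x by nra.
  apply: (Rle_trans _ (sqrt L / 2)); last lra.
  apply: Rle_trans (ln_succ_le_half y_ge8).
  by apply: ln_le_mono; lra.
have Ld : L / d <= x by apply: div_le_of_mul; nra.
have -> : (d - 2) * (L / d - (ln 2 + K)) =
          L - 2 * (L / d) - d * (ln 2 + K) + 2 * (ln 2 + K).
  by field; lra.
have [ln2_gt0 ln2_lt1] := ln2_bounds.
have dK : d * (ln 2 + K) <= 2 * (x + K) by nra.
lra.
Qed.

Lemma choose_multiplier (k D : nat) (L : R) : (0 < k)%N -> (0 < D)%N ->
  2 * INR k <= exp (L / INR D) ->
  exists m : nat, [/\ (0 < m)%N, (INR k * INR m) ^ D <= exp L &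
                      exp (L / INR D) / (2 * INR k) <= INR m].
Proof.
move=> /ltP/lt_0_INR k_pos /ltP/lt_0_INR D_pos big_E.
set E := exp (L / INR D) in big_E *.
have t_ge2 : 2 <= E / INR k by apply: le_div_of_mul; lra.
have kt : INR k * (E / INR k) = E by field; lra.
have [m [m_gt m_le]] := nat_floor (ltac:(lra) : 0 <= E / INR k).
exists m; split.
- by apply/ltP/INR_lt; rewrite /=; lra.
- apply: (Rle_trans _ (E ^ D)).
    by apply: pow_incr; split; [apply: Rmult_le_pos; lra | nra].
  rewrite pow_as_exp; last exact: exp_pos.
  by rewrite /E ln_exp; right; congr exp; field; lra.
- have -> : E / (2 * INR k) = E / INR k / 2 by field; lra.
  lra.
Qed.

(* The length D of the vectors: D is about sqrt(L/K) + 1, which makes (k m)^D <= n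
   compatible with m >= exp(L/D)/(2k) >= 1. *)
Lemma choose_length (K L : R) : 1 <= K -> 16 * K <= L ->
  exists D : nat, [/\ (2 <= D)%N,
    sqrt (K * L) / K < INR D <= sqrt (K * L) / K + 1 & ln 2 + K <= L / INR D].
Proof.
move=> K_ge1 KL; have [Kx xL] := geometric_mean_bounds (ltac:(lra) : 0 <= K) KL.
set x := sqrt (K * L) in Kx xL *.
have sK : x / K * K = x by field; lra.
have [D [D_gt D_le]] := @nat_floor (x / K + 1) (ltac:(nra)).
have D_ge2 : (2 <= D)%N by apply/leP/INR_le; rewrite /=; nra.
have D_pos : 0 < INR D by apply: lt_0_INR; apply/ltP; lia.
exists D; split => //; first lra.
have [_ ln2_lt1] := ln2_bounds.
have KD : K * INR D <= x + K.
  by have := Rmult_le_compat_l K _ _ (ltac:(lra)) D_le; rewrite Rmult_plus_distr_l; nra.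
apply: le_div_of_mul => //.
have := Rmult_le_compat_r (INR D) (ln 2 + K) (2 * K) (ltac:(lra)) (ltac:(lra)).
lra.
Qed.

Lemma pow_div_as_exp (a : R) (D : nat) : 0 < a -> (2 <= D)%N ->
  a ^ (D - 2) / INR D = exp ((INR D - 2) * ln a - ln (INR D)).
Proof.
move=> a_pos D_ge2; have D_pos : 0 < INR D by apply: lt_0_INR; apply/ltP; lia.
rewrite pow_as_exp // minus_INR; last exact/leP.
by rewrite /Rminus exp_plus exp_Ropp exp_ln //.
Qed.

Lemma parameter_choice (n k : nat) : (3 <= k)%N -> 100 <= ln (INR n) ->
  16 * ln (INR k) <= ln (INR n) ->
  exists m D : nat, [/\ (0 < m)%N, (2 <= D)%N, (INR k * INR m) ^ D <= INR n &
    INR n * exp (- 5 * sqrt (ln (INR k) * ln (INR n))) <= INR m ^ (D - 2) / INR D].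
Proof.
move=> k_ge3 L_ge100 KL.
have n_pos : 0 < INR n by apply: pos_of_ln_pos; lra.
have k_ge3R : 3 <= INR k by have := le_INR 3 k (elimT leP k_ge3); rewrite /=; lra.
set K := ln (INR k) in KL *; set L := ln (INR n) in L_ge100 KL *.
have K_ge1 : 1 <= K.
  rewrite -(ln_exp 1); apply: ln_le_mono; first exact: exp_pos.
  by have := exp_le_3; lra.
have [D [D_ge2 D_range D_small]] := choose_length K_ge1 KL.
have big_E : 2 * INR k <= exp (L / INR D).
  rewrite -(exp_ln (2 * INR k)); last lra.
  by apply: exp_le_mono; rewrite ln_mult -/K; lra.
have [m [m_gt0 km_le m_ge]] :=
  @choose_multiplier k D L (ltac:(lia) : (0 < k)%N) (ltac:(lia) : (0 < D)%N) big_E.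
exists m, D; split => //; first by rewrite -[INR n]exp_ln.
set a := exp (L / INR D) / (2 * INR k) in m_ge.
have a_pos : 0 < a by apply: Rdiv_lt_0_compat; [exact: exp_pos | lra].
have ln_a : ln a = L / INR D - (ln 2 + K).
  rewrite /a /Rdiv ln_mult ?ln_Rinv ?ln_mult ?ln_exp //; try lra.
  by apply: Rinv_0_lt_compat; lra.
apply: (Rle_trans _ (a ^ (D - 2) / INR D)); last first.
  apply: Rmult_le_compat_r; first by left; apply/Rinv_0_lt_compat/lt_0_INR/ltP; lia.
  by apply: pow_incr; lra.
rewrite pow_div_as_exp // -[INR n]exp_ln // -/L -exp_plus ln_a.
by apply: exp_le_mono; have := exponent_estimate K_ge1 L_ge100 KL D_range; lra.
Qed.

Lemma INR_expn (m D : nat) : INR (m ^ D)%N = INR m ^ D.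
Proof. by elim: D => [|D IH] //; rewrite expnS -multE mult_INR IH. Qed.

Lemma BO_Zn_lower_real (n k : nat) : (3 <= k)%N -> 100 <= ln (INR n) ->
  16 * ln (INR k) <= ln (INR n) ->
  INR n * exp (- 5 * sqrt (ln (INR k) * ln (INR n))) <=
  INR (BO [the finZmodType of 'Z_n] k).
Proof.
move=> k_ge3 L_ge100 KL.
have [m [D [m_gt0 D_ge2 room bound]]] := parameter_choice k_ge3 L_ge100 KL.
apply: Rle_trans bound _.
have room_nat : ((k * m) ^ D <= n)%N.
  by apply/leP/INR_le; rewrite INR_expn -multE mult_INR.
have := BO_Zn_lower (ltac:(lia) : (1 < k)%N) m_gt0 (ltac:(lia) : (0 < D)%N) room_nat.
move/leP/le_INR; rewrite INR_expn -!multE !mult_INR => le_mD.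
have m_pos : 0 < INR m by apply/lt_0_INR/ltP.
have D_pos : 0 < INR D by apply/lt_0_INR/ltP; lia.
have m_split : INR m ^ D = INR m ^ (D - 2) * (INR m * INR m).
  by rewrite -[in LHS](subnK D_ge2) pow_add /=; ring.
apply: div_le_of_mul => //; apply: (Rmult_le_reg_r (INR m * INR m)); first nra.
by rewrite -m_split; lra.
Qed.

Lemma ln_eventually_large : exists N : nat, forall n : nat, (N <= n)%N -> 100 <= ln (INR n).
Proof.
have [N [N_gt _]] := @nat_floor (exp 100 + 1) (ltac:(have := exp_pos 100; lra)).
exists N => n /leP/le_INR N_le; rewrite -[100]ln_exp.
by apply: ln_le_mono; [exact: exp_pos | lra].
Qed.

Lemma eventually_small_ratio (k : nat -> nat) :
  Un_cv (fun n : nat => ln (INR (k n)) / ln (INR n)) 0 ->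
  exists N : nat, forall n : nat, (N <= n)%N -> 0 < ln (INR n) ->
    16 * ln (INR (k n)) <= ln (INR n).
Proof.
move=> /(_ (1 / 16) ltac:(lra)) [N close]; exists N => n /leP /close.
rewrite /R_dist Rminus_0_r => /Rabs_def2 [ratio_lt _] L_pos.
have -> : ln (INR (k n)) = ln (INR (k n)) / ln (INR n) * ln (INR n) by field; lra.
nra.
Qed.

Theorem mainTheorem11 (k : nat -> nat) :
  (exists N : nat, forall n : nat, (N <= n)%N -> (3 <= k n)%N /\ (k n <= n - 3)%N) ->
  Un_cv (fun n : nat => ln (INR (k n)) / ln (INR n)) 0 ->
  exists N : nat, forall n : nat, (N <= n)%N ->
    INR n * exp (- 5 * sqrt (ln (INR (k n)) * ln (INR n))) <=
    INR (BO [the finZmodType of 'Z_n] (k n)).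
Proof.
move=> [N1 k_range] /eventually_small_ratio [N2 small_ratio].
have [N3 large_ln] := ln_eventually_large.
exists (maxn N1 (maxn N2 N3)) => n; rewrite !geq_max => /and3P [n_N1 n_N2 n_N3].
have L_ge100 := large_ln n n_N3.
have KL := small_ratio n n_N2 (ltac:(lra)).
by case: (k_range n n_N1) => k_ge3 _; apply: BO_Zn_lower_real.
Qed.
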